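(* Let $K\in\{1,2,3,4\}$, let $n_0\ge 0$, and let $\alpha_1,\dots,\alpha_K\ge 0$ and $\beta_1,\dots,\beta_K>0$ be real numbers. Consider the linear function $f(x_1,\dots,x_K)=\sum_{k=1}^{K}\alpha_k x_k$ of real variables $x_1,\dots,x_K$, subject to the constraints $$\Big|\sum_{k\in\mathcal{K}}\beta_k x_k\Big|\le n_0\sqrt{\sum_{k\in\mathcal{K}}\beta_k}\quad\text{for every nonempty } \mathcal{K}\subseteq\{1,2,\dots,K\}.$$ Set $\gamma_k=\alpha_k/\beta_k$ and choose a permutation $\sigma$ of $\{1,\dots,K\}$ such that $\gamma_{\sigma(1)}\le\gamma_{\sigma(2)}\le\dots\le\gamma_{\sigma(K)}$; write $\tilde\gamma_k=\gamma_{\sigma(k)}$, $\tilde\alpha_k=\alpha_{\sigma(k)}$, $\tilde\beta_k=\beta_{\sigma(k)}$, $\tilde x_k=x_{\sigma(k)}$, and $\tilde\gamma_0=0$. Then the maximum of $f$ over the feasible set is $$f_{\max}=\mathcal{F}(K,n_0,V_\alpha,V_\beta):=n_0\sum_{n=1}^{K}(\tilde\gamma_n-\tilde\gamma_{n-1})\sqrt{\sum_{k=n}^{K}\tilde\beta_k},$$ where $V_\alpha=[\alpha_1,\dots,\alpha_K]$, $V_\beta=[\beta_1,\dots,\beta_K]$, and it is attained at the feasible point given by $\tilde x_k=\tilde x_k^{*}$, where $$\tilde x_k^{*}=\frac{n_0}{\tilde\beta_k}\left(\sqrt{\sum_{n=k}^{K}\tilde\beta_n}-\sqrt{\sum_{n=k+1}^{K}\tilde\beta_n}\right),\quad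 k=1,\dots,K$$ (an empty sum being $0$). Moreover, the minimum of $f$ over the feasible set is $f_{\min}=-f_{\max}=-\mathcal{F}(K,n_0,V_\alpha,V_\beta)$, attained at $\tilde x_k=-\tilde x_k^{*}$, $k=1,\dots,K$. *)

From HB Require Import structures.
From mathcomp Require Import all_boot all_order all_algebra all_fingroup.
From mathcomp Require Import reals.
Set Implicit Arguments. Unset Strict Implicit. Unset Printing Implicit Defensive.
Import Order.TTheory GRing.Theory Num.Theory.
Local Open Scope ring_scope.

Definition lin_obj (R : realType) (K : nat) (alpha x : 'I_K -> R) : R :=
  \sum_(k < K) alpha k * x k.

Definition feasible (R : realType) (K : nat) (n0 : R) (beta x : 'I_K -> R) : Prop :=
  forall S : {set 'I_K}, S != set0 ->
    `| \sum_(k in S) beta k * x k | <= n0 * Num.sqrt (\sum_(k in S) beta k).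

(* 1-based "tilde" of a family: tld sigma f n = f (sigma (n-1)) for 1 <= n <= K,
   and 0 otherwise (in particular tld sigma f 0 = 0, giving gamma~_0 = 0). *)
Definition tld (R : realType) (K : nat) (sigma : 'S_K) (f : 'I_K -> R) (n : nat) : R :=
  if n is m.+1 then odflt 0 (omap (fun i : 'I_K => f (sigma i)) (insub m)) else 0.

Definition gammaf (R : realType) (K : nat) (alpha beta : 'I_K -> R) (k : 'I_K) : R :=
  alpha k / beta k.

Definition Fmax (R : realType) (K : nat) (n0 : R) (sigma : 'S_K)
  (alpha beta : 'I_K -> R) : R :=
  n0 * \sum_(1 <= n < K.+1)
        (tld sigma (gammaf alpha beta) n - tld sigma (gammaf alpha beta) n.-1)
        * Num.sqrt (\sum_(n <= k < K.+1) tld sigma beta k).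

Definition xstar_tld (R : realType) (K : nat) (n0 : R) (sigma : 'S_K)
  (beta : 'I_K -> R) (k : nat) : R :=
  n0 / tld sigma beta k *
  (Num.sqrt (\sum_(k <= n < K.+1) tld sigma beta n)
   - Num.sqrt (\sum_(k.+1 <= n < K.+1) tld sigma beta n)).

(* the point x* in original coordinates: x_{sigma(j)} = x~*_{j+1} (0-based j) *)
Definition xstar (R : realType) (K : nat) (n0 : R) (sigma : 'S_K)
  (beta : 'I_K -> R) (i : 'I_K) : R :=
  xstar_tld n0 sigma beta (sigma^-1 i)%g.+1.

From HB Require Import structures.
From mathcomp Require Import all_boot all_order all_algebra all_fingroup.
From mathcomp Require Import reals ring lra.
Import Order.TTheory GRing.Theory Num.Theory.
Local Open Scope ring_scope.

Set Implicit Arguments.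
Unset Strict Implicit.

(* Write T_n = sum_(k >= n) b~_k for the tails of the sorted weights.  Abel
   summation gives f(x) = sum_n (g~_n - g~_(n-1)) * sum_(k >= n) b~_k x~_k, whose
   coefficients are nonnegative because g~ is sorted and g~_0 = 0 <= g~_1; each
   inner tail sum is at most n0 sqrt(T_n) by the constraint for the index set
   {s(n), ..., s(K)}, hence f <= F.  The weighted entries b~_k x~*_k =
   n0 (sqrt T_k - sqrt T_(k+1)) telescope, so x* makes every tail constraint
   tight and f(x* ) = F.  It is feasible because the increments of the square
   root shrink as its argument grows: summed over any index set S they add up
   to at most sqrt(sum_(k in S) b~_k).  The minimum follows from the symmetry
   x |-> -x. *)

Section SquareRootTails.
Variable R : realType.

Lemma sqrt_increment_antitone (T U b : R) : 0 <= U -> U <= T -> 0 <= b ->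
  Num.sqrt (T + b) - Num.sqrt T <= Num.sqrt (U + b) - Num.sqrt U.
Proof.
move=> U0 UT b0; have T0 : 0 <= T by apply: le_trans UT.
have cross : Num.sqrt (T + b) * Num.sqrt U <= Num.sqrt (U + b) * Num.sqrt T.
  rewrite -!sqrtrM ?addr_ge0 //; apply: ler_wsqrtr; nra.
have e1 := sqr_sqrtr (addr_ge0 T0 b0); have e2 := sqr_sqrtr U0.
have e3 := sqr_sqrtr (addr_ge0 U0 b0); have e4 := sqr_sqrtr T0.
have s1 := sqrtr_ge0 (T + b); have s2 := sqrtr_ge0 U.
have s3 := sqrtr_ge0 (U + b); have s4 := sqrtr_ge0 T.
suff: Num.sqrt (T + b) + Num.sqrt U <= Num.sqrt (U + b) + Num.sqrt T by lra.
rewrite -ler_sqr ?nnegrE ?addr_ge0 // !sqrrD e1 e2 e3 e4 !mulr2n; lra.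
Qed.

Lemma summation_by_parts (g z : nat -> R) m : g 0%N = 0 ->
  \sum_(1 <= j < m.+1) g j * z j =
  \sum_(1 <= n < m.+1) (g n - g n.-1) * \sum_(n <= j < m.+1) z j.
Proof.
move=> g0; elim: m => [|m IH]; first by rewrite !big_geq.
have telescope : \sum_(1 <= n < m.+1) (g n - g n.-1) = g m.
  elim: m {IH} => [|m IH]; first by rewrite big_geq.
  by rewrite big_nat_recr //= IH; ring.
rewrite big_nat_recr // IH [in RHS]big_nat_recr //=.
under [in RHS]eq_big_nat => n /andP[_ hn].
  rewrite big_nat_recr ?(ltnW hn) // mulrDr.
over.
rewrite big_split /= -big_distrl /= telescope big_nat1; ring.
Qed.

Definition tail (b : nat -> R) (N k : nat) : R := \sum_(k <= j < N) b j.

Lemma tail_succ (b : nat -> R) N k : (k < N)%N -> tail b N k = tail b N k.+1 + b k.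
Proof. by move=> hk; rewrite /tail big_ltn // addrC. Qed.

Lemma tail_succ_le (b : nat -> R) N k : 0 <= b k -> tail b N k.+1 <= tail b N k.
Proof.
move=> hb; case: (ltnP k N) => hk; first by rewrite (tail_succ _ hk) lerDl.
by rewrite /tail !big_geq // leqW.
Qed.

Lemma sum_sqrt_tail_decrements_le (b : nat -> R) N (P : pred nat) m :
  (forall k, 0 <= b k) ->
  \sum_(m <= k < N | P k) (Num.sqrt (tail b N k) - Num.sqrt (tail b N k.+1))
  <= Num.sqrt (\sum_(m <= k < N | P k) b k).
Proof.
move=> hb; have [d] := ubnP (N - m); elim: d m => // d IH m hd.
have [hm | hN] := ltnP m N; last by rewrite !big_geq // sqrtr0.
have hd' : (N - m.+1 < d)%N by rewrite subnS prednK ?subn_gt0 // -ltnS.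
rewrite big_ltn_cond // [X in _ <= Num.sqrt X]big_ltn_cond //.
case: (P m); last exact: IH.
set U := \sum_(m.+1 <= i < N | P i) b i.
have U_ge0 : 0 <= U by apply: sumr_ge0.
have U_le_tail : U <= tail b N m.+1.
  by rewrite /U /tail big_mkcond; apply: ler_sum_nat => i _; case: (P i).
have := sqrt_increment_antitone U_ge0 U_le_tail (hb m); have := IH _ hd'.
rewrite (tail_succ _ hm) -/U (addrC (b m)); lra.
Qed.

End SquareRootTails.

Section PermutedSums.
Variables (R : realType) (K : nat) (sigma : 'S_K).

Lemma tldE (f : 'I_K -> R) (j : 'I_K) : tld sigma f j.+1 = f (sigma j).
Proof. by rewrite /tld /= valK. Qed.

Lemma tldS (f : 'I_K -> R) j (hj : (j < K)%N) :
  tld sigma f j.+1 = f (sigma (Ordinal hj)).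
Proof. exact: (tldE f (Ordinal hj)). Qed.

Lemma tld_out (f : 'I_K -> R) j : (K <= j)%N -> tld sigma f j.+1 = 0.
Proof. by move=> hj; rewrite /tld /= insubF // ltnNge hj. Qed.

Lemma tldM (f h : 'I_K -> R) k :
  tld sigma (fun i => f i * h i) k = tld sigma f k * tld sigma h k.
Proof. by case: k => [|k] /=; rewrite ?mul0r //; case: insub => //=; rewrite mul0r. Qed.

Lemma sum_perm_tld (h : 'I_K -> R) (Q : pred 'I_K) (P : pred nat) :
  P 0%N = false -> (forall j : 'I_K, P j.+1 = Q j) ->
  \sum_(i | Q (sigma^-1 i)%g) h i = \sum_(k < K.+1 | P k) tld sigma h k.
Proof.
move=> P0 PQ; rewrite (reindex_inj (@perm_inj _ sigma)) /=.
rewrite [RHS]big_mkcond big_ord_recl P0 /= add0r big_mkcond.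
by apply: eq_bigr => j _; rewrite permK /bump leq0n add1n PQ add0n valK.
Qed.

Lemma sum_perm_tail (h : 'I_K -> R) n : (1 <= n)%N ->
  \sum_(i in [set i | (n <= (sigma^-1 i)%g.+1)%N]) h i
  = \sum_(n <= k < K.+1) tld sigma h k.
Proof.
move=> hn; rewrite big_geq_mkord -(@sum_perm_tld h (fun j : 'I_K => n <= j.+1)%N (fun k => n <= k)%N).
- by apply: eq_bigl => i; rewrite inE.
- by case: n hn.
- by [].
Qed.

End PermutedSums.

Lemma feasibleN (R : realType) (K : nat) (n0 : R) (beta x : 'I_K -> R) :
  feasible n0 beta x -> feasible n0 beta (fun i => - x i).
Proof.
move=> hx S hS; under eq_bigr do rewrite mulrN.
by rewrite sumrN normrN; apply: hx.
Qed.

Lemma lin_objN (R : realType) (K : nat) (alpha x : 'I_K -> R) :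
  lin_obj alpha (fun i => - x i) = - lin_obj alpha x.
Proof. by rewrite /lin_obj -sumrN; apply: eq_bigr => i _; rewrite mulrN. Qed.

Section Optimum.
Variables (R : realType) (K : nat) (n0 : R) (alpha beta : 'I_K -> R) (sigma : 'S_K).
Hypotheses (hn0 : 0 <= n0) (halpha : forall k, 0 <= alpha k)
  (hbeta : forall k, 0 < beta k).
Hypothesis hsorted : forall i j : 'I_K, (i <= j)%N ->
  gammaf alpha beta (sigma i) <= gammaf alpha beta (sigma j).

Local Notation g := (tld sigma (gammaf alpha beta)).
Local Notation b := (tld sigma beta).
Local Notation T := (tail b K.+1).
Local Notation weighted x := (tld sigma (fun i => beta i * x i)).

Lemma tld_beta_ge0 k : 0 <= b k.
Proof.
case: k => [|k] //; have [hk | hk] := ltnP k K; last by rewrite tld_out.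
by rewrite (tldS _ _ hk) ltW.
Qed.

Lemma gamma_increment_ge0 n : (1 <= n < K.+1)%N -> 0 <= g n - g n.-1.
Proof.
case: n => [//|[|n]] /andP[_]; rewrite ltnS => hn.
  by rewrite (tldS _ _ hn) /= subr0 /gammaf divr_ge0 // ltW.
have hn' : (n < K)%N := ltnW hn.
by rewrite subr_ge0 (tldS _ _ hn) (tldS _ _ hn'); apply: hsorted.
Qed.

Lemma lin_obj_by_parts x : lin_obj alpha x =
  \sum_(1 <= n < K.+1) (g n - g n.-1) * \sum_(n <= j < K.+1) weighted x j.
Proof.
rewrite -summation_by_parts //.
have -> : lin_obj alpha x =
    \sum_(i in [set i | 1 <= (sigma^-1 i)%g.+1]%N) alpha i * x i.
  by apply: eq_bigl => i; rewrite inE.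
rewrite sum_perm_tail //; apply: eq_big_nat => -[//|k] _.
have [hk | hk] := ltnP k K; last by rewrite !tld_out // !mul0r.
rewrite !tldM !(tldS _ _ hk) /gammaf; field.
by rewrite gt_eqF.
Qed.

Lemma FmaxE : Fmax n0 sigma alpha beta =
  \sum_(1 <= n < K.+1) (g n - g n.-1) * (n0 * Num.sqrt (T n)).
Proof. by rewrite /Fmax mulr_sumr; apply: eq_bigr => n _; rewrite mulrCA. Qed.

Lemma lin_obj_le_Fmax x : feasible n0 beta x ->
  lin_obj alpha x <= Fmax n0 sigma alpha beta.
Proof.
move=> hx; rewrite lin_obj_by_parts FmaxE; apply: ler_sum_nat => n hn.
apply: ler_wpM2l; first exact: gamma_increment_ge0.
case/andP: hn => hn1 hnK; rewrite /tail -!sum_perm_tail //.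
apply: le_trans (ler_norm _) (hx _ _).
have hn' : (n.-1 < K)%N by rewrite prednK.
by apply/set0Pn; exists (sigma (Ordinal hn')); rewrite inE permK /= prednK.
Qed.

Lemma weighted_xstar k : (k < K.+1)%N ->
  weighted (xstar n0 sigma beta) k = n0 * (Num.sqrt (T k) - Num.sqrt (T k.+1)).
Proof.
case: k => [_ | k]; first by rewrite tail_succ //= addr0 subrr mulr0.
rewrite ltnS => hk.
rewrite (tldS _ _ hk) /xstar permK /xstar_tld tldE /tail /=; field.
by rewrite gt_eqF.
Qed.

Lemma tail_weighted_xstar n : (n <= K.+1)%N ->
  \sum_(n <= j < K.+1) weighted (xstar n0 sigma beta) j = n0 * Num.sqrt (T n).
Proof.
move=> hn; rewrite (eq_big_nat _ _ (F2 := fun k =>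
    n0 * (- Num.sqrt (T k.+1) - - Num.sqrt (T k)))); last first.
  by move=> k /andP[_ hk]; rewrite weighted_xstar // opprK addrC.
rewrite -mulr_sumr (telescope_sumr (fun k => - Num.sqrt (T k)) hn).
by rewrite /tail big_geq // sqrtr0 oppr0 add0r opprK.
Qed.

Lemma lin_obj_xstar : lin_obj alpha (xstar n0 sigma beta) = Fmax n0 sigma alpha beta.
Proof.
rewrite lin_obj_by_parts FmaxE; apply: eq_big_nat => n /andP[_ hn].
by rewrite tail_weighted_xstar // ltnW.
Qed.

Lemma feasible_xstar : feasible n0 beta (xstar n0 sigma beta).
Proof.
move=> S _.
pose P (k : nat) := [exists j : 'I_K, (k == j.+1) && (sigma j \in S)].
have P0 : P 0%N = false by apply/negbTE/existsP => -[].
have PS (j : 'I_K) : P j.+1 = (sigma j \in S).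
  apply/existsP/idP => [[j' /andP[/eqP [/val_inj ->]]] // | hj].
  by exists j; rewrite eqxx.
have sum_S (h : 'I_K -> R) :
    \sum_(i in S) h i = \sum_(k < K.+1 | P k) tld sigma h k.
  by rewrite -(sum_perm_tld sigma h P0 PS); apply: eq_bigl => i; rewrite permKV.
rewrite !sum_S (eq_bigr _ (fun k _ => weighted_xstar (ltn_ord k))) -mulr_sumr.
have decrements_ge0 :
    0 <= \sum_(k < K.+1 | P k) (Num.sqrt (T k) - Num.sqrt (T k.+1)).
  apply: sumr_ge0 => k _; rewrite subr_ge0 ler_wsqrtr //.
  exact/tail_succ_le/tld_beta_ge0.
rewrite ger0_norm ?mulr_ge0 //; apply: ler_wpM2l => //.
by have := @sum_sqrt_tail_decrements_le _ b K.+1 P 0 tld_beta_ge0; rewrite !big_mkord.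
Qed.

End Optimum.

Unset Implicit Arguments.

Theorem theorem1 (R : realType) (K : nat) (hK1 : (1 <= K)%N) (hK4 : (K <= 4)%N)
  (n0 : R) (hn0 : 0 <= n0) (alpha beta : 'I_K -> R)
  (halpha : forall k, 0 <= alpha k) (hbeta : forall k, 0 < beta k)
  (sigma : 'S_K)
  (hsorted : forall i j : 'I_K, (i <= j)%N ->
      gammaf alpha beta (sigma i) <= gammaf alpha beta (sigma j)) :
  (* maximum *)
  feasible n0 beta (xstar n0 sigma beta) /\
  lin_obj alpha (xstar n0 sigma beta) = Fmax n0 sigma alpha beta /\
  (forall x : 'I_K -> R, feasible n0 beta x ->
      lin_obj alpha x <= Fmax n0 sigma alpha beta) /\
  (* minimum *)
  feasible n0 beta (fun i => - xstar n0 sigma beta i) /\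
  lin_obj alpha (fun i => - xstar n0 sigma beta i) = - Fmax n0 sigma alpha beta /\
  (forall x : 'I_K -> R, feasible n0 beta x ->
      - Fmax n0 sigma alpha beta <= lin_obj alpha x).
Proof.
have upper x : feasible n0 beta x -> lin_obj alpha x <= Fmax n0 sigma alpha beta.
  exact: (lin_obj_le_Fmax halpha hbeta hsorted).
have value := lin_obj_xstar n0 alpha sigma hbeta.
have feas := feasible_xstar sigma hn0 hbeta.
do 3!split=> //; split; first exact: feasibleN.
split; first by rewrite lin_objN value.
by move=> x /feasibleN /upper; rewrite lin_objN lerNl.
Qed.
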